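(* There is a one-round proof labeling scheme for $\textsc{Trapezoid-Recognition}$ with certificates of size $\mathcal{O}(\log n)$; that is, a proof labeling scheme deciding whether the connected $n$-node network $G$ is a trapezoid graph, in which every certificate has $\mathcal{O}(\log n)$ bits.
   Context: A trapezoid graph is the intersection graph of a family of trapezoids each having one side on a fixed top horizontal line and one side on a fixed parallel bottom horizontal line (each trapezoid is the convex hull of two points on the top line and two points on the bottom line). $\textsc{Trapezoid-Recognition}$ is the set of configurations $\langle G,\mathrm{id}\rangle$ with $G$ a trapezoid graph. Distributed setting: $G$ is a simple connected $n$-node graph, each node has a unique identifier in $\{1,\dots,\mathrm{poly}(n)\}$, nodes know only a polynomial upper bound on $n$. A proof labeling scheme (one-round, $\mathsf{dM}$) consists of an untrusted prover assigning each node $v$ a certificate $c(v)$, followed by one deterministic verification round in which each node sees its own id and certificate and the certificates (and ids) of its neighbors and accepts or rejects. Completeness: if $G$ is in the class, some certificate assignment makes all nodes accept. Soundness: if $G$ is not in the class, for every certificate assignment at least one node rejects. Its size is the maximum certificate length in bits. *)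

From Stdlib Require Import Reals.
From mathcomp Require Import all_boot.

Set Implicit Arguments.
Unset Strict Implicit.
Unset Printing Implicit Defensive.

Definition simple_graph (n : nat) (e : rel 'I_n) : Prop :=
  (forall u v, e u v = e v u) /\ (forall v, e v v = false).

Definition connected_graph (n : nat) (e : rel 'I_n) : Prop :=
  forall u v, connect e u v.

(* Points of the plane; top line is y = 1, bottom line is y = 0. *)
Definition point := (R * R)%type.

(* A trapezoid is given by two x-coordinates on the top line (t1,t2) and
   two on the bottom line (b1,b2); the trapezoid is the convex hull of the
   four points (t1,1), (t2,1), (b1,0), (b2,0). *)
Record trapezoid := Trapezoid { top1 : R; top2 : R; bot1 : R; bot2 : R }.

Local Open Scope R_scope.
Definition in_trapezoid (T : trapezoid) (p : point) : Prop :=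
  exists l1 l2 l3 l4 : R,
    0 <= l1 /\ 0 <= l2 /\ 0 <= l3 /\ 0 <= l4 /\
    l1 + l2 + l3 + l4 = 1 /\
    fst p = l1 * top1 T + l2 * top2 T + l3 * bot1 T + l4 * bot2 T /\
    snd p = l1 * 1 + l2 * 1 + l3 * 0 + l4 * 0.

Definition trapezoids_intersect (T1 T2 : trapezoid) : Prop :=
  exists p : point, in_trapezoid T1 p /\ in_trapezoid T2 p.

Local Close Scope R_scope.

Definition trapezoid_graph (n : nat) (e : rel 'I_n) : Prop :=
  exists T : 'I_n -> trapezoid,
    forall u v, u != v -> (e u v <-> trapezoids_intersect (T u) (T v)).

Definition certificate := seq bool.

(* Since
   identifiers are unique this is exactly the set of pairs
   (id, certificate) of the neighbours. *)
Definition neighbour_view (n : nat) (e : rel 'I_n) (id : 'I_n -> nat)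
  (c : 'I_n -> certificate) (v : 'I_n) : nat -> option certificate :=
  fun j => match [pick u | e v u && (id u == j)] with
           | Some u => Some (c u)
           | None => None
           end.

(* A one-round deterministic verifier: given the known upper bound N on n,
   its own identifier, its own certificate and its neighbourhood view,
   a node accepts (true) or rejects (false). *)
Definition verifier :=
  nat -> nat -> certificate -> (nat -> option certificate) -> bool.

Definition accepts_at (A : verifier) (N n : nat) (e : rel 'I_n)
  (id : 'I_n -> nat) (c : 'I_n -> certificate) (v : 'I_n) : bool :=
  A N (id v) (c v) (neighbour_view e id c v).

Definition admissible (k n N : nat) (e : rel 'I_n) (id : 'I_n -> nat) : Prop :=
  0 < n /\ simple_graph e /\ connected_graph e /\
  injective id /\ (forall v, 1 <= id v <= n ^ k) /\ n <= N <= n ^ k.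

Definition trapezoid_PLS (k : nat) (A : verifier) (f : nat -> nat) : Prop :=
  forall n N (e : rel 'I_n) (id : 'I_n -> nat),
    @admissible k n N e id ->
    (trapezoid_graph e ->
       exists c : 'I_n -> certificate,
         (forall v, size (c v) <= f n) /\ (forall v, accepts_at A N e id c v))
    /\
    (~ trapezoid_graph e ->
       forall c : 'I_n -> certificate, exists v, accepts_at A N e id c v = false).

From Stdlib Require Import Reals Lra Psatz.
From mathcomp Require Import all_boot zify.

Set Implicit Arguments.
Unset Strict Implicit.
Unset Printing Implicit Defensive.

(* Two trapezoids intersect iff neither lies strictly left of the other on
   both lines, so a trapezoid graph is the incomparability graph of the order
   "left of", and this order is also realized by integer boxes with O(n)
   coordinates.  A node's certificate holds its box, claimed numbers of nodes
   to its left and right, and a spanning tree with subtree sizes certifying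
   n.  A claimed count is only accepted next to a neighbour with a smaller
   count whose left side is contained in the node's, so by induction no claim
   exceeds the true count; the local check deg + left + right + 1 = n then
   forces every node incomparable to v to be adjacent to v. *)

(** * Geometry of trapezoids *)

Section Geometry.

Local Open Scope R_scope.

Definition tmin (T : trapezoid) := Rmin (top1 T) (top2 T).
Definition tmax (T : trapezoid) := Rmax (top1 T) (top2 T).
Definition bmin (T : trapezoid) := Rmin (bot1 T) (bot2 T).
Definition bmax (T : trapezoid) := Rmax (bot1 T) (bot2 T).

Definition lo_at (T : trapezoid) (y : R) := y * tmin T + (1 - y) * bmin T.
Definition hi_at (T : trapezoid) (y : R) := y * tmax T + (1 - y) * bmax T.

Definition left_of (T U : trapezoid) : Prop := tmax T < tmin U /\ bmax T < bmin U.

Lemma tmin_le_tmax T : tmin T <= tmax T.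
Proof.
by rewrite /tmin /tmax; have := Rmin_l (top1 T) (top2 T); have := Rmax_l (top1 T) (top2 T); lra.
Qed.

Lemma bmin_le_bmax T : bmin T <= bmax T.
Proof.
by rewrite /bmin /bmax; have := Rmin_l (bot1 T) (bot2 T); have := Rmax_l (bot1 T) (bot2 T); lra.
Qed.

Lemma lo_at_le_hi_at T y : 0 <= y <= 1 -> lo_at T y <= hi_at T y.
Proof.
move=> hy; have := tmin_le_tmax T; have := bmin_le_bmax T; rewrite /lo_at /hi_at; nra.
Qed.

Lemma Rmin_Rmax_cases (a b : R) :
  Rmin a b = a /\ Rmax a b = b \/ Rmin a b = b /\ Rmax a b = a.
Proof.
destruct (Rle_dec a b).
- by left; split; [apply: Rmin_left|apply: Rmax_right]; lra.
- by right; split; [apply: Rmin_right|apply: Rmax_left]; lra.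
Qed.

Lemma convex_point (x lo hi : R) :
  lo <= x <= hi -> exists s, 0 <= s <= 1 /\ x = (1 - s) * lo + s * hi.
Proof.
move=> hx; destruct (Req_dec hi lo) as [e|ne]; first by exists 0; split; lra.
have hs : (x - lo) / (hi - lo) * (hi - lo) = x - lo by field; lra.
exists ((x - lo) / (hi - lo)); split; [split; nra|field; lra].
Qed.

Lemma Rmin_Rmax_convex (a b s : R) : 0 <= s <= 1 ->
  exists m, 0 <= m <= 1 /\ (1 - s) * Rmin a b + s * Rmax a b = m * a + (1 - m) * b.
Proof.
move=> hs; have [[-> ->]|[-> ->]] := Rmin_Rmax_cases a b;
  [exists (1 - s)|exists s]; (split; [lra|ring]).
Qed.

Lemma in_trapezoidP T x y :
  in_trapezoid T (x, y) <-> 0 <= y <= 1 /\ lo_at T y <= x <= hi_at T y.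
Proof.
rewrite /lo_at /hi_at /tmin /tmax /bmin /bmax; split.
- case=> [l1 [l2 [l3 [l4 [h1 [h2 [h3 [h4 [hs [/= -> /= ->]]]]]]]]]].
  have := Rmin_l (top1 T) (top2 T); have := Rmin_r (top1 T) (top2 T).
  have := Rmax_l (top1 T) (top2 T); have := Rmax_r (top1 T) (top2 T).
  have := Rmin_l (bot1 T) (bot2 T); have := Rmin_r (bot1 T) (bot2 T).
  have := Rmax_l (bot1 T) (bot2 T); have := Rmax_r (bot1 T) (bot2 T).
  have -> : 1 - (l1 * 1 + l2 * 1 + l3 * 0 + l4 * 0) = l3 + l4 by lra.
  by split; [|split]; nra.
- move=> [hy hx]; have [s [hs ->]] := convex_point hx.
  have [m [hm em]] := Rmin_Rmax_convex (top1 T) (top2 T) hs.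
  have [m' [hm' em']] := Rmin_Rmax_convex (bot1 T) (bot2 T) hs.
  exists (y * m), (y * (1 - m)), ((1 - y) * m'), ((1 - y) * (1 - m')).
  do 4 (split; first by apply: Rmult_le_pos; lra).
  split; first ring; split => /=; last ring.
  transitivity (y * ((1 - s) * Rmin (top1 T) (top2 T) + s * Rmax (top1 T) (top2 T)) +
                (1 - y) * ((1 - s) * Rmin (bot1 T) (bot2 T) + s * Rmax (bot1 T) (bot2 T)));
    first ring.
  by rewrite em em'; ring.
Qed.

Lemma trapezoids_intersect_sections T U :
  trapezoids_intersect T U <->
  exists y, 0 <= y <= 1 /\ lo_at U y <= hi_at T y /\ lo_at T y <= hi_at U y.
Proof.
split.
- case=> [[x y] [/in_trapezoidP[hy hT] /in_trapezoidP[_ hU]]].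
  by exists y; lra.
- case=> y [hy [hUT hTU]].
  have := lo_at_le_hi_at T hy; have := lo_at_le_hi_at U hy => hU hT.
  exists (Rmax (lo_at T y) (lo_at U y), y); rewrite !in_trapezoidP.
  by destruct (Rle_dec (lo_at T y) (lo_at U y));
    [rewrite Rmax_right|rewrite Rmax_left]; lra.
Qed.

(* Where an affine function crosses zero, a second one that dominates its
   opposite at both ends is nonnegative. *)
Lemma crossing_point f0 f1 g0 g1 : f0 < 0 <= f1 -> 0 <= f0 + g0 -> 0 <= f1 + g1 ->
  exists y, 0 <= y <= 1 /\ 0 <= y * f1 + (1 - y) * f0 /\ 0 <= y * g1 + (1 - y) * g0.
Proof.
move=> hf h0 h1; set y := f0 / (f0 - f1).
have ey : y * (f1 - f0) = - f0 by rewrite /y; field; lra.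
have hy : 0 <= y <= 1 by split; nra.
exists y; split=> //; split; first by nra.
have : 0 <= y * (f1 + g1) + (1 - y) * (f0 + g0) by nra.
nra.
Qed.

Lemma common_nonneg_point f0 f1 g0 g1 : 0 <= f0 + g0 -> 0 <= f1 + g1 ->
  ~ (f0 < 0 /\ f1 < 0) -> ~ (g0 < 0 /\ g1 < 0) ->
  exists y, 0 <= y <= 1 /\ 0 <= y * f1 + (1 - y) * f0 /\ 0 <= y * g1 + (1 - y) * g0.
Proof.
move=> h0 h1 hf hg.
destruct (Rlt_dec f0 0) as [f0n|f0p].
  have f1p : 0 <= f1 by apply: Rnot_lt_le => f1n; apply: hf.
  exact: crossing_point.
destruct (Rlt_dec g0 0) as [g0n|g0p]; last by exists 0; lra.
have g1p : 0 <= g1 by apply: Rnot_lt_le => g1n; apply: hg.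
have [|||y [hy [hg' hf']]] := @crossing_point g0 g1 f0 f1; try lra.
by exists y.
Qed.

Lemma left_of_section_lt T U y : left_of T U -> 0 <= y <= 1 -> hi_at T y < lo_at U y.
Proof.
move=> [ht hb] hy; rewrite /hi_at /lo_at.
have hb' : 0 <= (1 - y) * (bmin U - bmax T) by apply: Rmult_le_pos; lra.
destruct (Req_dec y 0) as [->|hy0]; first by lra.
have ht' : 0 < y * (tmin U - tmax T) by apply: Rmult_lt_0_compat; lra.
lra.
Qed.

Lemma trapezoids_intersectP T U :
  trapezoids_intersect T U <-> ~ left_of T U /\ ~ left_of U T.
Proof.
rewrite trapezoids_intersect_sections; split.
  by case=> y [hy hs]; split=> /left_of_section_lt /(_ hy); lra.
case=> hTU hUT.
have := tmin_le_tmax T; have := tmin_le_tmax U.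
have := bmin_le_bmax T; have := bmin_le_bmax U => hbU hbT htU htT.
have [||||y [hy [hf hg]]] := @common_nonneg_point
  (bmax T - bmin U) (tmax T - tmin U) (bmax U - bmin T) (tmax U - tmin T).
- lra.
- lra.
- by move=> h; apply: hTU; split; lra.
- by move=> h; apply: hUT; split; lra.
by exists y; rewrite /lo_at /hi_at; lra.
Qed.

End Geometry.

(** * Strict orders, adjacency and spanning trees *)

Lemma sum_bool_card (T : finType) (b : pred T) : \sum_u (b u : nat) = #|[set u | b u]|.
Proof. by rewrite -sum1dep_card [RHS]big_mkcond; apply: eq_bigr => u _; case: (b u). Qed.

Section Partition.

Variables (T : finType) (lt : rel T).
Hypotheses (lt_irr : irreflexive lt) (lt_asym : forall u v, lt u v -> ~~ lt v u).

Lemma card_order_split v :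
  #|T| = 1 + #|[set u | lt u v]| + #|[set u | lt v u]|
           + #|[set u | (u != v) && ~~ lt u v && ~~ lt v u]|.
Proof.
have part u : 1 = (u == v) + lt u v + lt v u + ((u != v) && ~~ lt u v && ~~ lt v u).
  case: (eqVneq u v) => [->|_]; first by rewrite lt_irr.
  by case h1: (lt u v); case h2: (lt v u) => //; move: (lt_asym h1); rewrite h2.
rewrite -[LHS]sum1_card (eq_bigr _ (fun u _ => part u)) !big_split /= !sum_bool_card.
by rewrite -(cards1 v); congr (_ + _ + _ + _); apply: eq_card => u; rewrite !inE.
Qed.

End Partition.

Section OrderGraph.

Variables (T : finType) (e lt : rel T).
Hypotheses (e_sym : symmetric e) (e_irr : irreflexive e).
Hypotheses (lt_irr : irreflexive lt) (lt_trans : transitive lt).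
Hypothesis e_incomparable : forall u v, u != v -> e u v = ~~ lt u v && ~~ lt v u.

Lemma lt_asym u v : lt u v -> ~~ lt v u.
Proof. by move=> huv; apply/negP => /(lt_trans huv); rewrite lt_irr. Qed.

Lemma e_not_lt u v : e u v -> ~~ lt u v /\ ~~ lt v u.
Proof.
move=> euv; have uv : u != v by apply: contraTneq euv => ->; rewrite e_irr.
by move: euv; rewrite e_incomparable // => /andP.
Qed.

Lemma card_neighbours v :
  #|[set u | e v u]| + #|[set u | lt u v]| + #|[set u | lt v u]| + 1 = #|T|.
Proof.
have -> : [set u | e v u] = [set u | (u != v) && ~~ lt u v && ~~ lt v u].
  apply/setP => u; rewrite !inE; case: (eqVneq u v) => [->|uv]; first by rewrite e_irr.
  by rewrite e_incomparable 1?eq_sym // andbC.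
by rewrite [RHS](card_order_split lt_irr lt_asym v); lia.
Qed.

Lemma pred_subset_neighbour u v :
  e v u -> [set x | lt x u] \subset [set x | lt x v] :|: [set z | e v z && lt z u].
Proof.
move=> evu; have [nvu nuv] := e_not_lt evu.
apply/subsetP => x; rewrite !inE => hxu; rewrite hxu andbT.
case: (boolP (lt x v)) => //= nxv.
have xv : x != v by apply: contraNneq nvu => <-.
rewrite e_incomparable 1?eq_sym // nxv andbT.
by apply: contra nvu => hvx; apply: lt_trans hvx hxu.
Qed.

Hypothesis e_connected : forall u v, connect e u v.

(* A neighbour of [v] whose set of predecessors is minimal among the
   neighbours lying below the far end of an edge leaving the predecessors of
   [v] has a strictly smaller set of predecessors. *)
Lemma exists_smaller_neighbour v x0 :
  lt x0 v -> exists w, e v w /\ [set x | lt x w] \proper [set x | lt x v].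
Proof.
move=> hx0.
have [z [y [ezy lzv nyv]]] : exists z y, [/\ e z y, lt z v & ~~ lt y v].
  suff /existsP[z /existsP[y /and3P[]]] : [exists z, exists y, [&& e z y, lt z v & ~~ lt y v]].
    by exists z, y.
  apply: contraT; rewrite negb_exists => /forallP hno.
  have step a b : e a b -> lt a v -> lt b v.
    move=> eab hav; apply: contraT => hbv.
    by move: (hno a) => /existsPn /(_ b); rewrite eab hav hbv.
  have cl : closed e [pred x | lt x v].
    by move=> a b eab; apply/idP/idP => /=; apply: step; rewrite // e_sym.
  by have := closed_connect cl (e_connected x0 v); rewrite !inE hx0 lt_irr.
have [nzy _] := e_not_lt ezy.
have nvy : ~~ lt v y by apply: contra nzy; apply: lt_trans.
have yv : y != v by apply: contraNneq nzy => ->.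
have evy : e v y by rewrite e_incomparable 1?eq_sym // nvy nyv.
pose S w := e v w && ((w == y) || lt w y).
have Sy : S y by rewrite /S evy eqxx.
case: (arg_minnP (fun w => #|[set x | lt x w]|) Sy) => w /andP[evw hwy] wmin.
have lwy s : lt s w -> lt s y.
  by case/orP: hwy => [/eqP <- //|hwy] /lt_trans; apply.
have [nvw nwv] := e_not_lt evw.
exists w; split => //; rewrite properE; apply/andP; split; last first.
  by apply/subsetPn; exists z; rewrite !inE //; apply: contra nzy; apply: lwy.
apply/subsetP => s; rewrite !inE => hsw; apply: contraT => nsv.
have nvs : ~~ lt v s by apply: contra nvw => /lt_trans; apply.
have evs : e v s.
  by rewrite e_incomparable ?nvs ?nsv //; apply: contraNneq nvw => ->.
have Ss : S s by rewrite /S evs lwy ?orbT.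
suff : #|[set x | lt x s]| < #|[set x | lt x w]| by rewrite ltnNge wmin.
apply: proper_card; rewrite properE; apply/andP; split.
  by apply/subsetP => x; rewrite !inE => /lt_trans; apply.
by apply/subsetPn; exists s; rewrite !inE ?lt_irr.
Qed.

End OrderGraph.

Section SpanningTree.

Variables (T : finType) (e : rel T) (id : T -> nat).
Hypotheses (e_sym : symmetric e) (id_inj : injective id).

(* Every node but the roots (identifier [r]) is counted once in the subtree
   value of its parent, so the root values add up to the number of nodes. *)
Lemma sum_root_subtree (r : nat) (par s : T -> nat) :
  (forall u, id u != r -> exists2 w, e u w & id w = par u) ->
  (forall v, s v = 1 + \sum_(u | e v u && (par u == id v) && (id u != r)) s u) ->
  \sum_(v | id v == r) s v = #|T|.
Proof.
move=> hpar hs.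
have : \sum_v s v = #|T| + \sum_(u | id u != r) s u.
  rewrite (eq_bigr _ (fun v _ => hs v)) big_split /= sum1_card; congr (_ + _).
  rewrite (eq_bigr (fun v => \sum_u if e v u && (par u == id v) && (id u != r)
                                    then s u else 0)) => [|v _]; last exact: big_mkcond.
  rewrite exchange_big [RHS]big_mkcond; apply: eq_bigr => u _.
  case: (boolP (id u != r)) => hu; last by rewrite big1 // => v _; rewrite andbF.
  have [w euw hw] := hpar u hu.
  rewrite (bigD1 w) //= big1 ?addn0 => [|v vw]; first by rewrite e_sym euw hw eqxx.
  case: ifP => // /andP[/andP[_ /eqP hv] _].
  by move: vw; rewrite (id_inj (etrans hw hv)) eqxx.
by rewrite (bigID (fun v => id v == r)) /= => /eqP; rewrite eqn_add2r => /eqP.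
Qed.

Fixpoint tree_size (child : rel T) (f : nat) (v : T) : nat :=
  if f is f'.+1 then 1 + \sum_(u | child u v) tree_size child f' u else 1.

Variable v0 : T.
Hypothesis connected_v0 : forall v, connect e v0 v.

Definition layer (k : nat) : {set T} :=
  iter k (fun S => S :|: [set y | [exists x in S, e x y]]) [set v0].

Lemma layerS k x y : x \in layer k -> e x y -> y \in layer k.+1.
Proof.
move=> hx exy; rewrite [layer _]/= !inE; apply/orP; right.
by apply/existsP; exists x; rewrite hx.
Qed.

Lemma connect_layer v : exists k, v \in layer k.
Proof.
have /connectP[p hp ->] := connected_v0 v.
exists (size p); elim/last_ind: p hp => [|p y IH]; first by rewrite /= inE.
by rewrite rcons_path last_rcons size_rcons => /andP[/IH]; apply: layerS.
Qed.

Lemma layer_step k v :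
  v \in layer k.+1 -> v \notin layer k -> exists2 x, x \in layer k & e x v.
Proof.
rewrite [layer k.+1]/= -/(layer k) !inE => /orP[-> //|/existsP[x /andP[hx exv]]] _.
by exists x.
Qed.

Lemma exists_bfs_tree :
  exists (par : T -> T) (d : T -> nat),
    forall u, u != v0 -> e u (par u) /\ (d (par u)).+1 = d u.
Proof.
pose d v := ex_minn (connect_layer v).
have dP v : v \in layer (d v) /\ forall k, v \in layer k -> d v <= k.
  by rewrite /d; case: ex_minnP.
have dpar u : u != v0 -> exists w, e u w && ((d w).+1 == d u).
  move=> uv0; have [hu umin] := dP u.
  case Eu: (d u) hu => [|k] hu; first by move: uv0; rewrite /= inE in hu; rewrite hu.
  have nu : u \notin layer k by apply/negP => /umin; rewrite Eu ltnn.
  have [w hw ewu] := layer_step hu nu.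
  have [hw' wmin] := dP w.
  have := umin _ (layerS hw' ewu); have := wmin _ hw; rewrite Eu => h1 h2.
  by exists w; rewrite e_sym ewu /= eqSS eqn_leq h1.
exists (fun u => odflt v0 [pick w | e u w && ((d w).+1 == d u)]), d => u uv0.
case: pickP => [w /andP[euw /eqP hw] //|none].
by have [w hw] := dpar u uv0; move: (none w); rewrite hw.
Qed.

Lemma exists_subtree_sizes :
  exists (par : T -> T) (s : T -> nat),
  [/\ forall u, u != v0 -> e u (par u),
      forall v, s v = 1 + \sum_(u | e v u && (id (par u) == id v) && (id u != id v0)) s u,
      s v0 = #|T| & forall v, s v <= #|T|].
Proof.
have [par [d hd]] := exists_bfs_tree.
have neq_v0 u : id u != id v0 -> u != v0 by apply: contraNneq => ->.
pose child u v := e v u && (id (par u) == id v) && (id u != id v0).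
have child_d u v : child u v -> d u = (d v).+1.
  case/andP=> /andP[_ /eqP /id_inj <-] uv0.
  by have [] := hd u (neq_v0 u uv0).
pose K := (\max_v d v).+1.
pose s v := tree_size child (K - d v) v.
have hs v : s v = 1 + \sum_(u | child u v) s u.
  have : d v < K by rewrite ltnS (@leq_bigmax_cond _ xpredT d v).
  rewrite /s => /subnSK <- /=; congr (_ + _); apply: eq_bigr => u /child_d ->.
  by [].
have s_root : s v0 = #|T|.
  have hpar u : id u != id v0 -> exists2 w, e u w & id w = id (par u).
    by move=> uv0; exists (par u) => //; have [] := hd u (neq_v0 u uv0).
  rewrite -(sum_root_subtree hpar hs) (big_pred1 v0) // => v.
  by rewrite /= (inj_eq id_inj).
exists par, s; split => // [u uv0|v]; first by have [] := hd u uv0.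
elim: {v}(d v) {-2}v (erefl (d v)) => [|k IH] v dv;
  case: (eqVneq v v0) => [->|vv0]; rewrite ?s_root //.
  by have [_] := hd v vv0; rewrite dv.
have [evw dw] := hd v vv0.
apply: leq_trans (IH (par v) _); last by move: dw; rewrite dv => -[].
have cv : child v (par v) by rewrite /child e_sym evw eqxx (inj_eq id_inj) vv0.
by rewrite (hs (par v)) (bigD1 v cv) /=; lia.
Qed.

End SpanningTree.

(** * Certificates and the verifier *)

(* A natural number is written least significant bit first, each bit preceded
   by a [true] continuation flag and the whole terminated by [false]; the
   fuel [f] only has to exceed the number of bits. *)
Fixpoint encode_nat_fuel (f x : nat) : seq bool :=
  match f, x with
  | f'.+1, _.+1 => [:: true; odd x] ++ encode_nat_fuel f' x./2
  | _, _ => [:: false]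
  end.

Definition encode_nat (x : nat) : seq bool := encode_nat_fuel x x.

Fixpoint decode_nat (s : seq bool) : nat * seq bool :=
  match s with
  | true :: b :: s' => let: (x, r) := decode_nat s' in (b + x.*2, r)
  | _ :: s' => (0, s')
  | [::] => (0, [::])
  end.

Definition encode_seq (l : seq nat) : seq bool := flatten (map encode_nat l).

Fixpoint decode_seq (m : nat) (s : seq bool) : seq nat :=
  if m is m'.+1 then let: (x, r) := decode_nat s in x :: decode_seq m' r else [::].

Lemma decode_encode_nat_fuel f x s :
  x <= f -> decode_nat (encode_nat_fuel f x ++ s) = (x, s).
Proof.
elim: f x => [|f IH] [|x] hx //=.
rewrite IH; last by rewrite leq_uphalf_double -addnn; lia.
by rewrite uphalfK; case: (odd x).
Qed.

Lemma decode_encode_seq l : decode_seq (size l) (encode_seq l) = l.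
Proof. by elim: l => //= x l IH; rewrite decode_encode_nat_fuel // IH. Qed.

Lemma size_encode_nat_fuel f x m : x < 2 ^ m -> size (encode_nat_fuel f x) <= m.*2.+1.
Proof.
elim: f x m => [|f IH] [|x] [|m] //=; rewrite ?expn0 // expnS => hx.
by rewrite doubleS !ltnS IH // ltn_uphalf_double -mul2n.
Qed.

Lemma size_encode_seq l m :
  all (fun x => x < 2 ^ m) l -> size (encode_seq l) <= size l * m.*2.+1.
Proof.
elim: l => //= x l IH /andP[hx hl].
by rewrite size_cat mulSn leq_add // ?IH // size_encode_nat_fuel.
Qed.

(* The box [top_lo, top_hi] x [bot_lo, bot_hi] is the discrete trapezoid of a
   node; [nleft]/[nright] claim the numbers of nodes entirely to its
   left/right; [root_id], [nnodes], [subtree] and [parent] describe a spanning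
   tree used to certify the number of nodes. *)
Record label := Label {
  top_lo : nat; top_hi : nat; bot_lo : nat; bot_hi : nat;
  nleft : nat; nright : nat; root_id : nat; nnodes : nat; subtree : nat; parent : nat }.

Definition label_fields (l : label) : seq nat :=
  [:: top_lo l; top_hi l; bot_lo l; bot_hi l; nleft l; nright l;
      root_id l; nnodes l; subtree l; parent l].

Definition encode_label (l : label) : certificate := encode_seq (label_fields l).

Definition decode_label (c : certificate) : label :=
  let s := decode_seq 10 c in
  Label (nth 0 s 0) (nth 0 s 1) (nth 0 s 2) (nth 0 s 3) (nth 0 s 4)
        (nth 0 s 5) (nth 0 s 6) (nth 0 s 7) (nth 0 s 8) (nth 0 s 9).

Lemma encode_labelK : cancel encode_label decode_label.
Proof.
by case=> *; rewrite /decode_label /encode_label (decode_encode_seq (label_fields _)).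
Qed.

Lemma size_encode_label l m :
  all (fun x => x < 2 ^ m) (label_fields l) -> size (encode_label l) <= 10 * m.*2.+1.
Proof. exact: size_encode_seq. Qed.

Definition box_left (a b : label) : bool :=
  (top_hi a < top_lo b) && (bot_hi a < bot_lo b).

Definition incomparable (a b : label) : bool := ~~ box_left a b && ~~ box_left b a.

Definition shrinks_left (w v : label) : bool :=
  (top_lo w <= top_lo v) && (bot_lo w <= bot_lo v).

Definition shrinks_right (w v : label) : bool :=
  (top_hi v <= top_hi w) && (bot_hi v <= bot_hi w).

Section LocalCheck.

(* The neighbourhood of the checking node: its neighbours are the [j] with
   [nb j], of identifier [idx j] and label [y j]; [i] and [x] are the
   identifier and label of the node itself. *)
Variables (I : finType) (nb : pred I) (idx : I -> nat) (y : I -> label).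
Variables (i : nat) (x : label).

(* Certifies that [cnt] does not exceed the number of nodes lying [before]
   the node (see [count_le_card]). *)
Definition count_ok (cnt : label -> nat) (before shrinks : rel label) : bool :=
  ((0 < cnt x) ==> [exists j, [&& nb j, cnt (y j) < cnt x & shrinks (y j) x]]) &&
  [forall j, nb j ==> (cnt (y j) <= cnt x + \sum_(j' | nb j' && before (y j') (y j)) 1)].

Definition local_ok : bool :=
  [&& top_lo x <= top_hi x, bot_lo x <= bot_hi x,
      [forall j, nb j ==>
         [&& incomparable x (y j), root_id (y j) == root_id x & nnodes (y j) == nnodes x]],
      count_ok nleft box_left shrinks_left,
      count_ok nright (fun a b => box_left b a) shrinks_right,
      \sum_(j | nb j) 1 + nleft x + nright x + 1 == nnodes x,
      (i == root_id x) ==> (subtree x == nnodes x),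
      (i != root_id x) ==> [exists j, nb j && (idx j == parent x)]
    & subtree x ==
        1 + \sum_(j | nb j && (parent (y j) == i) && (idx j != root_id x)) subtree (y j)].

End LocalCheck.

(* Identifiers are at most [N ^ k], so a node scans the identifiers below
   [(N ^ k).+1] for its neighbours. *)
Definition trapezoid_verifier (k : nat) : verifier := fun N i c view =>
  local_ok (fun j : 'I_(N ^ k).+1 => view j != None) val
           (fun j => decode_label (odflt [::] (view j))) i (decode_label c).

Section Reindex.

Variables (I J : finType) (nbI : pred I) (nbJ : pred J) (f : I -> J).
Hypothesis f_inj : injective f.
Hypothesis nbJ_f : forall i, nbJ (f i) = nbI i.
Hypothesis nbJ_onto : forall j, nbJ j -> exists i, f i = j.

Lemma reindex_forall (PI : pred I) (PJ : pred J) :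
  {in nbI, forall i, PJ (f i) = PI i} ->
  [forall j, nbJ j ==> PJ j] = [forall i, nbI i ==> PI i].
Proof.
move=> hP; apply/forallP/forallP => h => [i|j].
  by apply/implyP => hi; rewrite -hP // (implyP (h (f i))) ?nbJ_f.
apply/implyP => /[dup] /nbJ_onto[i <-]; rewrite nbJ_f => hi.
by rewrite hP // (implyP (h i)).
Qed.

Lemma reindex_exists (PI : pred I) (PJ : pred J) :
  {in nbI, forall i, PJ (f i) = PI i} ->
  [exists j, nbJ j && PJ j] = [exists i, nbI i && PI i].
Proof.
move=> hP; apply/existsP/existsP => [[j /andP[/[dup] /nbJ_onto[i <-]]]|[i /andP[hi]]].
  by rewrite nbJ_f => hi; rewrite hP // => hPi; exists i; rewrite hi.
by rewrite -hP // => hPi; exists (f i); rewrite nbJ_f hi.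
Qed.

Lemma reindex_sum (PI : pred I) (PJ : pred J) (gI : I -> nat) (gJ : J -> nat) :
  {in nbI, forall i, PJ (f i) = PI i} -> {in nbI, forall i, gJ (f i) = gI i} ->
  \sum_(j | nbJ j && PJ j) gJ j = \sum_(i | nbI i && PI i) gI i.
Proof.
move=> hP hg; set S := [set i | nbI i && PI i].
transitivity (\sum_(i in S) gJ (f i)); last first.
  by apply: eq_big => [i|i]; rewrite inE // => /andP[hi _]; rewrite hg.
rewrite -(big_imset _ (in2W f_inj)) /=; apply: eq_bigl => j.
apply/idP/imsetP => [/andP[/[dup] /nbJ_onto[i <-]]|[i]].
  by rewrite nbJ_f => hi; rewrite hP // => hPi; exists i; rewrite // inE hi.
by rewrite inE => /andP[hi hPi] ->; rewrite nbJ_f hi hP.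
Qed.

Variables (idxI : I -> nat) (idxJ : J -> nat) (yI : I -> label) (yJ : J -> label).
Hypothesis idx_f : forall i, idxJ (f i) = idxI i.
Hypothesis y_f : {in nbI, forall i, yJ (f i) = yI i}.

Lemma count_ok_reindex x cnt before shrinks :
  count_ok nbJ yJ x cnt before shrinks = count_ok nbI yI x cnt before shrinks.
Proof.
rewrite /count_ok (reindex_exists (PI := fun j => (cnt (yI j) < cnt x) && shrinks (yI j) x));
  last by move=> j hj; rewrite y_f.
congr (_ && _); apply: reindex_forall => j hj.
by rewrite y_f // (reindex_sum (PI := fun j' => before (yI j') (yI j)) (gI := fun=> 1))
  // => j' hj'; rewrite !y_f.
Qed.

Lemma local_ok_reindex i x : local_ok nbJ idxJ yJ i x = local_ok nbI idxI yI i x.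
Proof.
have deg : \sum_(j | nbJ j) 1 = \sum_(j | nbI j) 1.
  rewrite -(eq_bigl _ _ (fun j => andbT (nbJ j))) -(eq_bigl _ _ (fun j => andbT (nbI j))).
  exact: reindex_sum.
rewrite /local_ok !count_ok_reindex deg.
rewrite (reindex_forall (PI := fun j =>
    [&& incomparable x (yI j), root_id (yI j) == root_id x & nnodes (yI j) == nnodes x]));
  last by move=> j hj; rewrite y_f.
rewrite (reindex_exists (PI := fun j => idxI j == parent x)); last by move=> j; rewrite idx_f.
rewrite -!(eq_bigl _ _ (fun j => andbA _ _ _)).
by rewrite (reindex_sum (PI := fun j => (parent (yI j) == i) && (idxI j != root_id x))
                        (gI := fun j => subtree (yI j))) // => j hj; rewrite ?idx_f y_f.
Qed.

End Reindex.

Section NeighbourView.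

Variables (n : nat) (e : rel 'I_n) (id : 'I_n -> nat) (c : 'I_n -> certificate).
Hypothesis id_inj : injective id.

Lemma neighbour_view_id v u :
  neighbour_view e id c v (id u) = if e v u then Some (c u) else None.
Proof.
rewrite /neighbour_view; case: pickP => [w /andP[evw /eqP /id_inj wu]|none].
  by subst w; rewrite evw.
by case: ifP => // evu; move: (none u); rewrite evu eqxx.
Qed.

Lemma neighbour_view_some v j x :
  neighbour_view e id c v j = Some x -> exists u, [/\ e v u, id u = j & x = c u].
Proof. by rewrite /neighbour_view; case: pickP => // u /andP[evu /eqP <-] [<-]; exists u. Qed.

Lemma accepts_atE k N (x : 'I_n -> label) v :
  (forall u, id u < (N ^ k).+1) -> (forall u, decode_label (c u) = x u) ->
  accepts_at (trapezoid_verifier k) N e id c v = local_ok (e v) id x (id v) (x v).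
Proof.
move=> id_lt cx; rewrite /accepts_at /trapezoid_verifier cx.
apply: (local_ok_reindex (f := fun u => Ordinal (id_lt u)))
  => [u w [] /id_inj //|u|j|//|u evu].
- by rewrite /= neighbour_view_id; case: (e v u).
- case E: (neighbour_view e id c v j) => [y|//] _.
  by have [u [_ idu _]] := neighbour_view_some E; exists u; apply: val_inj.
- by have {}evu : e v u := evu; rewrite /= neighbour_view_id evu /= cx.
Qed.

End NeighbourView.

(** * Soundness *)

Section Soundness.

Variables (T : finType) (e : rel T) (id : T -> nat) (x : T -> label).
Hypotheses (e_sym : symmetric e) (e_irr : irreflexive e).
Hypotheses (e_connected : forall u v, connect e u v) (id_inj : injective id).
Hypothesis ok : forall v, local_ok (e v) id x (id v) (x v).

Lemma box_ok v : (top_lo (x v) <= top_hi (x v)) && (bot_lo (x v) <= bot_hi (x v)).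
Proof. by case/and5P: (ok v) => -> ->. Qed.

Lemma neighbour_ok v u : e v u ->
  [&& incomparable (x v) (x u), root_id (x u) == root_id (x v) & nnodes (x u) == nnodes (x v)].
Proof. by case/and5P: (ok v) => _ _ /forallP /(_ u) /implyP. Qed.

Lemma const_on_edges (A : eqType) (f : T -> A) :
  (forall u v, e u v -> f u = f v) -> forall u v, f u = f v.
Proof.
move=> hf u v; have cl : closed e [pred w | f w == f u].
  by move=> a b /hf eab; rewrite !inE eab.
by have := closed_connect cl (e_connected u v); rewrite !inE eqxx => /esym/eqP.
Qed.

Lemma nnodes_card v : nnodes (x v) = #|T|.
Proof.
have root_const u : root_id (x u) = root_id (x v).
  apply: (const_on_edges (f := fun w => root_id (x w))) => a b.
  by move/neighbour_ok/and3P=> [_ /eqP -> _].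
have hpar u : id u != root_id (x v) -> exists2 w, e u w & id w = parent (x u).
  rewrite -(root_const u) => hu.
  case/and5P: (ok u) => _ _ _ _ /and5P[_ _ _ /implyP /(_ hu) /existsP[w /andP[euw /eqP]]].
  by exists w.
have hs u : subtree (x u) =
    1 + \sum_(w | e u w && (parent (x w) == id u) && (id w != root_id (x v))) subtree (x w).
  by case/and5P: (ok u) => _ _ _ _ /and5P[_ _ _ _ /eqP]; rewrite root_const.
have := sum_root_subtree e_sym id_inj hpar hs.
case: (pickP (fun u => id u == root_id (x v))) => [u hu|none]; last first.
  by rewrite big_pred0 // => /esym /card0_eq /(_ v).
rewrite (big_pred1 u) => [|w]; last by rewrite -(eqP hu) (inj_eq id_inj).
have nnodes_const : nnodes (x u) = nnodes (x v).
  apply: (const_on_edges (f := fun w => nnodes (x w))) => a b.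
  by move/neighbour_ok/and3P=> [_ _ /eqP ->].
case/and5P: (ok u) => _ _ _ _ /and5P[_ _ /implyP sub _ _].
by rewrite -nnodes_const -(eqP (sub _)) // root_const.
Qed.

(* By induction on [cnt]: the nodes counted for the smaller neighbour [w] and
   the neighbours of [w] lying [before] the node are disjoint sets of nodes
   lying [before] the node. *)
Lemma count_le_card cnt (before shrinks : rel label) :
  (forall a b c, before a b -> shrinks b c -> before a c) ->
  (forall v u, e v u -> ~~ before (x u) (x v)) ->
  (forall v, count_ok (e v) x (x v) cnt before shrinks) ->
  forall v, cnt (x v) <= #|[set u | before (x u) (x v)]|.
Proof.
move=> before_shrinks before_nbr hc v.
elim: (cnt (x v)).+1 {-2}v (ltnSn (cnt (x v))) => // m IH {}v; rewrite ltnS => hm.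
case: (posnP (cnt (x v))) => [-> //|hpos].
have /andP[/implyP/(_ hpos)/existsP[w /and3P[evw hlt hsh]] _] := hc v.
have /andP[_ /forallP/(_ v)] := hc w.
rewrite e_sym evw /= sum1dep_card => hcnt.
apply: leq_trans hcnt _; apply: leq_trans (leq_add (IH w (leq_trans hlt hm)) (leqnn _)) _.
rewrite -cardsUI (_ : _ :&: _ = set0) ?cards0 ?addn0; last first.
  apply/setP => u; rewrite !inE; case: (boolP (e w u)) => [/before_nbr /negbTE ->|] //.
  by rewrite andbF.
apply/subset_leq_card/subsetP => u; rewrite !inE => /orP[hu|/andP[_ //]].
exact: before_shrinks hu hsh.
Qed.

Lemma box_left_irr v : ~~ box_left (x v) (x v).
Proof. by have := box_ok v; rewrite /box_left; lia. Qed.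

Lemma box_left_asym u v : box_left (x u) (x v) -> ~~ box_left (x v) (x u).
Proof. by have := box_ok u; have := box_ok v; rewrite /box_left; lia. Qed.

Lemma neighbour_incomparable v u : e v u -> incomparable (x v) (x u).
Proof. by case/neighbour_ok/and3P. Qed.

Lemma nleft_le_card v : nleft (x v) <= #|[set u | box_left (x u) (x v)]|.
Proof.
apply: (count_le_card (shrinks := shrinks_left)) => [a b c||w].
- by rewrite /box_left /shrinks_left; lia.
- by move=> w u /neighbour_incomparable /andP[].
- by case/and5P: (ok w).
Qed.

Lemma nright_le_card v : nright (x v) <= #|[set u | box_left (x v) (x u)]|.
Proof.
apply: (count_le_card (shrinks := shrinks_right)
          (before := fun a b => box_left b a)) => [a b c||w].
- by rewrite /box_left /shrinks_right; lia.
- by move=> w u /neighbour_incomparable /andP[].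
- by case/and5P: (ok w) => _ _ _ _ /and5P[].
Qed.

(* Every node outside the boxes to the left and right of [v] is counted in
   the degree of [v], so all nodes with a box incomparable to [v] are
   neighbours of [v]. *)
Lemma neighbours_incomparable v :
  [set u | e v u] = [set u | (u != v) && incomparable (x u) (x v)].
Proof.
pose lt a b := box_left (x a) (x b).
have lt_irr : irreflexive lt by move=> a; apply/negbTE/box_left_irr.
have part := card_order_split lt_irr (@box_left_asym) v.
have deg : #|[set u | e v u]| + nleft (x v) + nright (x v) + 1 = #|T|.
  case/and5P: (ok v) => _ _ _ _ /and5P[_ /eqP + _ _ _].
  by rewrite sum1dep_card nnodes_card.
have sub : [set u | e v u] \subset [set u | (u != v) && ~~ lt u v && ~~ lt v u].
  apply/subsetP => u; rewrite !inE => evu.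
  have /andP[-> ->] := neighbour_incomparable evu; rewrite !andbT.
  by apply: contraTneq evu => ->; rewrite e_irr.
have := nleft_le_card v; have := nright_le_card v => hr hl.
have -> : [set u | (u != v) && incomparable (x u) (x v)] =
          [set u | (u != v) && ~~ lt u v && ~~ lt v u].
  by apply/setP => u; rewrite !inE andbA.
by apply/eqP; rewrite eqEcard sub /=; move: part; rewrite /lt; lia.
Qed.

End Soundness.

Definition trapezoid_of_label (l : label) : trapezoid :=
  Trapezoid (INR (top_lo l)) (INR (top_hi l)) (INR (bot_lo l)) (INR (bot_hi l)).

Lemma left_of_trapezoid_of_label a b :
  (top_lo a <= top_hi a) && (bot_lo a <= bot_hi a) ->
  (top_lo b <= top_hi b) && (bot_lo b <= bot_hi b) ->
  left_of (trapezoid_of_label a) (trapezoid_of_label b) <-> box_left a b.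
Proof.
move=> /andP[/leP /le_INR ha /leP /le_INR hc] /andP[/leP /le_INR hb /leP /le_INR hd].
rewrite /left_of /tmax /tmin /bmax /bmin /= !Rmax_right ?Rmin_left // /box_left.
split=> [[/INR_lt /ltP -> /INR_lt /ltP ->] //|/andP[/ltP /lt_INR ? /ltP /lt_INR ?]].
by split.
Qed.

Lemma local_ok_trapezoid_graph n (e : rel 'I_n) (id : 'I_n -> nat) (x : 'I_n -> label) :
  simple_graph e -> connected_graph e -> injective id ->
  (forall v, local_ok (e v) id x (id v) (x v)) -> trapezoid_graph e.
Proof.
move=> [e_sym e_irr] e_conn id_inj ok.
exists (fun u => trapezoid_of_label (x u)) => u v uv.
rewrite trapezoids_intersectP !left_of_trapezoid_of_label ?(box_ok ok) //.
have := neighbours_incomparable e_sym e_irr e_conn id_inj ok u.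
move=> /setP /(_ v); rewrite !inE eq_sym uv /incomparable => -> /=.
split=> [/andP[/negP h1 /negP h2] //|[h1 h2]].
by apply/andP; split; apply/negP.
Qed.

(** * Completeness *)

Definition Rltb (a b : R) : bool := if Rlt_dec a b then true else false.

Lemma RltbP a b : reflect (Rlt a b) (Rltb a b).
Proof. by rewrite /Rltb; case: Rlt_dec => h; constructor. Qed.

Section Discretize.

(* A strict order [lt] separated by the real intervals [lo v, hi v] is
   represented by integer intervals [dlo v, dhi v] that depend only on the
   sets of predecessors and successors; [dlo v] is just above the rank of the
   right ends of the predecessors of [v], and [dhi u] just below the least
   [dlo] of a successor of [u]. *)
Variables (T : finType) (lt : rel T) (lo hi : T -> R).
Hypothesis lo_le_hi : forall v, Rle (lo v) (hi v).
Hypothesis lt_sep : forall u v, lt u v -> Rlt (hi u) (lo v).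

Definition rank (v : T) : nat := #|[set u | Rltb (hi u) (hi v)]|.
Definition dlo (v : T) : nat := \max_(u | lt u v) (rank u).*2.+2.
Definition dhi (v : T) : nat := #|T|.*2.+1 - \max_(w | lt v w) (#|T|.*2.+2 - dlo w).

Lemma rank_lt u v : Rlt (hi u) (hi v) -> rank u < rank v.
Proof.
move=> huv; apply: proper_card; rewrite properE; apply/andP; split.
  by apply/subsetP => w; rewrite !inE => /RltbP hw; apply/RltbP; lra.
by apply/subsetPn; exists u; rewrite !inE; apply/RltbP; lra.
Qed.

Lemma rank_small v : rank v < #|T|.
Proof.
rewrite /rank -cardsT; apply: proper_card; rewrite properE subsetT /=.
by apply/subsetPn; exists v; rewrite !inE //; apply/RltbP; lra.
Qed.

Lemma dlo_ge u v : lt u v -> (rank u).*2.+2 <= dlo v.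
Proof. by move=> huv; apply: (@leq_bigmax_cond _ (lt^~ v) (fun u => (rank u).*2.+2)). Qed.

Lemma dlo_le v : dlo v <= (rank v).*2.
Proof.
apply/bigmax_leqP => u /lt_sep huv.
by have := rank_lt (Rlt_le_trans _ _ _ huv (lo_le_hi v)); lia.
Qed.

Lemma dlo_small v : dlo v <= #|T|.*2.
Proof. by have := dlo_le v; have := rank_small v; lia. Qed.

Lemma dhi_ge v : (rank v).*2.+1 <= dhi v.
Proof.
have : \max_(w | lt v w) (#|T|.*2.+2 - dlo w) <= #|T|.*2 - (rank v).*2.
  by apply/bigmax_leqP => w /dlo_ge; lia.
by have := rank_small v; rewrite /dhi; lia.
Qed.

Lemma dlo_le_dhi v : dlo v <= dhi v.
Proof. by have := dlo_le v; have := dhi_ge v; lia. Qed.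

Lemma dhi_small v : dhi v <= #|T|.*2.+1.
Proof. by rewrite /dhi leq_subr. Qed.

Lemma dhi_lt_dlo u v : lt u v -> dhi u < dlo v.
Proof.
move=> huv; have := @leq_bigmax_cond _ (lt u) (fun w => #|T|.*2.+2 - dlo w) v huv.
by have := dlo_ge huv; have := dlo_small v; rewrite /dhi; lia.
Qed.

Lemma bigmax_attained (I : finType) (P : pred I) (F : I -> nat) :
  0 < \max_(i | P i) F i -> exists2 i, P i & \max_(i | P i) F i = F i.
Proof.
case: (pickP P) => [i0 Pi0|none]; last by rewrite big_pred0.
by rewrite (bigmax_eq_arg _ Pi0) => _; case: arg_maxnP => // i Pi _; exists i.
Qed.

Lemma dlo_attained v : 0 < dlo v -> exists2 u, lt u v & dlo v = (rank u).*2.+2.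
Proof. exact: bigmax_attained. Qed.

Lemma dhi_attained u :
  dhi u < #|T|.*2.+1 -> exists2 w, lt u w & dhi u = #|T|.*2.+1 - (#|T|.*2.+2 - dlo w).
Proof.
rewrite /dhi => h.
have [|w uw ->] := bigmax_attained (P := lt u) (F := fun w => #|T|.*2.+2 - dlo w).
  by move: h; lia.
by exists w.
Qed.

(* The successor [w] of [u] realizing [dhi u] has a predecessor [z] realizing
   [dlo w <= dlo v], so the right end of [u] is at most that of [z]. *)
Lemma dhi_lt_dlo_sep u v : dhi u < dlo v -> Rlt (hi u) (lo v).
Proof.
move=> huv; have hv := dlo_small v.
have [|w uw hw] := @dhi_attained u; first by lia.
have := dlo_small w; have := dlo_ge uw => hw1 hw2.
have [|z zv hz] := @dlo_attained v; first by lia.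
have ruz : rank u <= rank z by lia.
have := lt_sep zv; have : Rle (hi u) (hi z) by apply: Rnot_lt_le => /rank_lt; lia.
lra.
Qed.

Lemma dlo_mono w v : [set u | lt u w] \subset [set u | lt u v] -> dlo w <= dlo v.
Proof.
move=> /subsetP sub; apply/bigmax_leqP => u uw; apply: dlo_ge.
by have := sub u; rewrite !inE; apply.
Qed.

Lemma dhi_anti w v : [set u | lt w u] \subset [set u | lt v u] -> dhi v <= dhi w.
Proof.
move=> /subsetP sub; rewrite /dhi leq_sub2l //.
by apply/bigmax_leqP => u wu; apply: leq_bigmax_cond; have := sub u; rewrite !inE; apply.
Qed.

End Discretize.

Section CountComplete.

Variables (T : finType) (e lt : rel T) (lab : T -> label).
Hypotheses (e_sym : symmetric e) (e_irr : irreflexive e).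
Hypothesis e_connected : forall u v, connect e u v.
Hypotheses (lt_irr : irreflexive lt) (lt_trans : transitive lt).
Hypothesis e_incomparable : forall u v, u != v -> e u v = ~~ lt u v && ~~ lt v u.

Variables (cnt : label -> nat) (before shrinks : rel label).
Hypothesis before_lab : forall a b, before (lab a) (lab b) = lt a b.
Hypothesis cnt_lab : forall v, cnt (lab v) = #|[set u | lt u v]|.
Hypothesis shrinks_lab : forall w v,
  [set u | lt u w] \subset [set u | lt u v] -> shrinks (lab w) (lab v).

Lemma count_ok_complete v : count_ok (e v) lab (lab v) cnt before shrinks.
Proof.
apply/andP; split.
  apply/implyP; rewrite cnt_lab => /card_gt0P[x0]; rewrite inE => x0v.
  have [w [evw pw]] := exists_smaller_neighbour e_sym e_irr lt_irr lt_trans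
                         e_incomparable e_connected x0v.
  apply/existsP; exists w; rewrite evw !cnt_lab (proper_card pw) shrinks_lab //.
  exact: proper_sub.
apply/forallP => u; apply/implyP => evu.
have -> : \sum_(z | e v z && before (lab z) (lab u)) 1 = #|[set z | e v z && lt z u]|.
  by rewrite sum1dep_card; apply: eq_card => z; rewrite !inE before_lab.
rewrite !cnt_lab; apply: leq_trans (leq_card_setU _ _).1.
exact/subset_leq_card/(pred_subset_neighbour e_irr lt_trans e_incomparable).
Qed.

End CountComplete.

Section TrapezoidOrder.

Variables (T : finType) (Tr : T -> trapezoid).

Definition trap_lt (u v : T) : bool :=
  Rltb (tmax (Tr u)) (tmin (Tr v)) && Rltb (bmax (Tr u)) (bmin (Tr v)).

Lemma trap_ltP u v : reflect (left_of (Tr u) (Tr v)) (trap_lt u v).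
Proof. by apply: (iffP andP) => -[/RltbP h1 /RltbP h2]; split=> //; apply/RltbP. Qed.

Lemma trap_lt_irr : irreflexive trap_lt.
Proof. by move=> v; apply/negbTE/trap_ltP => -[h _]; have := tmin_le_tmax (Tr v); lra. Qed.

Lemma trap_lt_trans : transitive trap_lt.
Proof.
move=> v u w /trap_ltP[h1 h2] /trap_ltP[h3 h4]; apply/trap_ltP.
by have := tmin_le_tmax (Tr v); have := bmin_le_bmax (Tr v); split; lra.
Qed.

Lemma trap_e_incomparable (e : rel T) :
  (forall u v, u != v -> (e u v <-> trapezoids_intersect (Tr u) (Tr v))) ->
  forall u v, u != v -> e u v = ~~ trap_lt u v && ~~ trap_lt v u.
Proof.
move=> hTr u v uv; apply/idP/idP.
  by move/(hTr _ _ uv)/trapezoids_intersectP => -[h1 h2]; rewrite !(introN (trap_ltP _ _)).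
move=> /andP[/trap_ltP h1 /trap_ltP h2]; apply/(hTr _ _ uv).
exact/trapezoids_intersectP.
Qed.

End TrapezoidOrder.

Section Completeness.

Variables (T : finType) (e : rel T) (id : T -> nat) (Tr : T -> trapezoid).
Hypotheses (e_sym : symmetric e) (e_irr : irreflexive e).
Hypotheses (e_connected : forall u v, connect e u v) (id_inj : injective id).
Hypothesis e_intersect :
  forall u v, u != v -> (e u v <-> trapezoids_intersect (Tr u) (Tr v)).

Variables (v0 : T) (par : T -> T) (s : T -> nat).
Hypothesis par_edge : forall u, u != v0 -> e u (par u).
Hypothesis s_rec : forall v,
  s v = 1 + \sum_(u | e v u && (id (par u) == id v) && (id u != id v0)) s u.
Hypothesis s_root : s v0 = #|T|.

Local Notation lt := (trap_lt Tr).
Local Notation gt := (fun a b => trap_lt Tr b a).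

Definition model_label (v : T) : label :=
  Label (dlo lt (fun u => tmax (Tr u)) v) (dhi lt (fun u => tmax (Tr u)) v)
        (dlo lt (fun u => bmax (Tr u)) v) (dhi lt (fun u => bmax (Tr u)) v)
        #|[set u | lt u v]| #|[set u | lt v u]| (id v0) #|T| (s v) (id (par v)).

Local Notation lab := model_label.

Let top_sep u v : lt u v -> Rlt (tmax (Tr u)) (tmin (Tr v)).
Proof. by case/trap_ltP. Qed.

Let bot_sep u v : lt u v -> Rlt (bmax (Tr u)) (bmin (Tr v)).
Proof. by case/trap_ltP. Qed.

Let top_ok v := tmin_le_tmax (Tr v).
Let bot_ok v := bmin_le_bmax (Tr v).

Lemma box_left_model_label u v : box_left (lab u) (lab v) = lt u v.
Proof.
apply/andP/idP => [[ht hb]|huv].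
  apply/trap_ltP; split; first exact: (dhi_lt_dlo_sep top_ok top_sep).
  exact: (dhi_lt_dlo_sep bot_ok bot_sep).
by split; [apply: (dhi_lt_dlo top_ok top_sep)|apply: (dhi_lt_dlo bot_ok bot_sep)].
Qed.

Let lt_incomparable := trap_e_incomparable e_intersect.

Let gt_trans : transitive gt.
Proof. by move=> v u w /= h1 h2; apply: trap_lt_trans h2 h1. Qed.

Let gt_incomparable u v : u != v -> e u v = ~~ gt u v && ~~ gt v u.
Proof. by move=> uv; rewrite lt_incomparable // andbC. Qed.

Lemma model_label_ok v : local_ok (e v) id lab (id v) (lab v).
Proof.
apply/and5P; split.
- exact: dlo_le_dhi top_ok top_sep v.
- exact: dlo_le_dhi bot_ok bot_sep v.
- apply/forallP => u; apply/implyP => evu; rewrite !eqxx !andbT /incomparable.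
  rewrite !box_left_model_label -lt_incomparable //.
  by apply: contraTneq evu => <-; rewrite e_irr.
- apply: (count_ok_complete e_sym e_irr e_connected (@trap_lt_irr _ Tr)
            (@trap_lt_trans _ Tr) lt_incomparable) => // [a b|w u /subsetP sub].
    exact: box_left_model_label.
  by apply/andP; split; apply: dlo_mono => //; apply/subsetP.
apply/and5P; split.
- apply: (count_ok_complete (lt := gt) e_sym e_irr e_connected (@trap_lt_irr _ Tr) gt_trans
            gt_incomparable) => // [a b|w u /subsetP sub].
    exact: box_left_model_label.
  by apply/andP; split; apply: dhi_anti => //; apply/subsetP.
- rewrite sum1dep_card /=.
  by rewrite (card_neighbours e_irr (@trap_lt_irr _ Tr) (@trap_lt_trans _ Tr) lt_incomparable).
- by apply/implyP => /eqP /id_inj ->; rewrite /= s_root.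
- apply/implyP => hv; apply/existsP; exists (par v).
  by rewrite par_edge ?eqxx //; apply: contraNneq hv => ->.
- by rewrite /= s_rec.
Qed.

Hypothesis s_le : forall v, s v <= #|T|.

Lemma model_label_fields_le v B :
  (forall u, id u <= B) -> all (fun f => f <= #|T|.*2.+1 + B) (label_fields (lab v)).
Proof.
move=> id_le.
have := dhi_small lt (fun u => tmax (Tr u)) v; have := dhi_small lt (fun u => bmax (Tr u)) v.
have := dlo_small top_ok top_sep v; have := dlo_small bot_ok bot_sep v.
have card_le (A : {set T}) : #|A| <= #|T| by rewrite -cardsT subset_leq_card ?subsetT.
have := card_le [set u | lt u v]; have := card_le [set u | lt v u].
have := id_le v0; have := id_le (par v); have := s_le v.
rewrite /=; move=> *; repeat (apply/andP; split); lia.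
Qed.

End Completeness.

(** * The proof labeling scheme *)

Lemma field_lt_pow n k x :
  x <= n.*2.+1 + n ^ k -> x < 2 ^ ((k + 3) * (trunc_log 2 n).+1).
Proof.
set t := trunc_log 2 n; set m := (k + 3) * t.+1 => hx.
have hn : n < 2 ^ t.+1 by apply: trunc_log_ltn.
have hnk : n ^ k <= 2 ^ (t.+1 * k).
  by rewrite expnM; case: k {m hx} => [|k]; rewrite ?expn0 // leq_exp2r // ltnW.
have e1 : 2 ^ t.+3 <= 2 ^ m by apply: leq_pexp2l => //; rewrite /m; nia.
have e2 : 2 ^ (t.+1 * k).+1 <= 2 ^ m by apply: leq_pexp2l => //; rewrite /m; nia.
by move: e1 e2 hn; rewrite !expnS; lia.
Qed.

Lemma id_lt_bound k n N (id : 'I_n -> nat) :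
  n <= N -> (forall v, 1 <= id v <= n ^ k) -> forall u, id u < (N ^ k).+1.
Proof.
move=> nN id_bnd u; rewrite ltnS; case/andP: (id_bnd u) => _ /leq_trans; apply.
by case: k {id_bnd} => [|k]; rewrite ?expn0 // leq_exp2r.
Qed.

Lemma trapezoid_completeness k n N (e : rel 'I_n) (id : 'I_n -> nat) :
  admissible k N e id -> trapezoid_graph e ->
  exists c : 'I_n -> certificate,
    (forall v, size (c v) <= 10 * (2 * k + 7) * (trunc_log 2 n).+1) /\
    (forall v, accepts_at (trapezoid_verifier k) N e id c v).
Proof.
case=> n_gt0 [[e_sym e_irr] [e_conn [id_inj [id_bnd /andP[nN _]]]]] [Tr hTr].
pose v0 : 'I_n := Ordinal n_gt0.
have [par [s [par_edge s_rec s_root s_le]]] :=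
  exists_subtree_sizes e_sym id_inj (fun v => e_conn v0 v).
pose lab := model_label id Tr v0 par s.
exists (fun v => encode_label (lab v)); split => v.
  apply: leq_trans (size_encode_label (m := (k + 3) * (trunc_log 2 n).+1) _) _.
    have /allP hall : all (fun f => f <= #|'I_n|.*2.+1 + n ^ k) (label_fields (lab v)).
      by apply: model_label_fields_le => // u; case/andP: (id_bnd u).
    by apply/allP => f /hall; rewrite card_ord; apply: field_lt_pow.
  by nia.
rewrite (accepts_atE e id_inj v (id_lt_bound nN id_bnd) (fun u => encode_labelK (lab u))).
exact: model_label_ok.
Qed.

Lemma trapezoid_soundness k n N (e : rel 'I_n) (id : 'I_n -> nat) (c : 'I_n -> certificate) :
  admissible k N e id -> (forall v, accepts_at (trapezoid_verifier k) N e id c v) ->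
  trapezoid_graph e.
Proof.
case=> _ [e_simple [e_conn [id_inj [id_bnd /andP[nN _]]]]] acc.
apply: (local_ok_trapezoid_graph (id := id) (x := fun u => decode_label (c u))) => // v.
by move: (acc v); rewrite (accepts_atE e id_inj v (id_lt_bound nN id_bnd) (fun u => erefl)).
Qed.

Theorem theorem2 :
  forall k : nat,
  exists (C : nat) (A : verifier),
    trapezoid_PLS k A (fun n => C * (trunc_log 2 n).+1).
Proof.
move=> k; exists (10 * (2 * k + 7)), (trapezoid_verifier k) => n N e id adm; split.
  exact: trapezoid_completeness.
move=> not_trapezoid c.
case: (boolP [forall v, accepts_at (trapezoid_verifier k) N e id c v]).
  by move=> /forallP /(trapezoid_soundness adm).
by move=> /forallPn[v /negbTE]; exists v.
Qed.
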